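(* If $\Gamma_G$ is population monotonic, then $G$ has no induced subgraph isomorphic to the cycle $C_4$.
   Context: $G=(V,E;w)$ is a finite simple graph with edge weights $w:E\to\mathbb{R}$, $w_e>0$ for all $e\in E$. The matching game on $G$ is the cooperative game $\Gamma_G=(N,\gamma)$ with player set $N=V$ and, for $S\subseteq N$, $\gamma(S)$ equal to the maximum weight of a matching in the induced subgraph $G[S]$ (so $\gamma(\emptyset)=0$). A population monotonic allocation scheme (PMAS) is a family $(\boldsymbol{x}_S)_{\emptyset\neq S\subseteq N}$ with $\boldsymbol{x}_S=(x_{S,i})_{i\in S}\in\mathbb{R}^S$ such that (efficiency) $\sum_{i\in S}x_{S,i}=\gamma(S)$ for every nonempty $S\subseteq N$, and (monotonicity) $x_{S,i}\le x_{T,i}$ whenever $\emptyset\ne S\subseteq T\subseteq N$ and $i\in S$. $\Gamma_G$ is called population monotonic if it admits a PMAS. *)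

From mathcomp Require Import all_boot all_order all_algebra.
Set Implicit Arguments. Unset Strict Implicit. Unset Printing Implicit Defensive.
Import Order.TTheory GRing.Theory Num.Theory.
Local Open Scope ring_scope.

(* A finite simple graph on vertex type V: edge set E, a set of 2-element
   subsets of V.  Edge weights: w : {set V} -> R (only values on E matter). *)
Definition simple_graph (V : finType) (E : {set {set V}}) : Prop :=
  forall f, f \in E -> #|f| = 2%N.

Definition is_matching_in (V : finType) (E : {set {set V}}) (S : {set V})
  (M : {set {set V}}) : bool :=
  [&& M \subset E, [forall f in M, f \subset S] & trivIset M].

(* gamma(S) = maximum weight of a matching in G[S]
   (the empty matching gives 0, so the max with default 0 is exact). *)
Definition gamma (R : realFieldType) (V : finType) (E : {set {set V}})
  (w : {set V} -> R) (S : {set V}) : R :=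
  \big[Num.max/0]_(M : {set {set V}} | is_matching_in E S M) \sum_(f in M) w f.

(* Population monotonic allocation scheme: x S i is the payoff of i in S. *)
Definition is_PMAS (R : realFieldType) (V : finType) (E : {set {set V}})
  (w : {set V} -> R) (x : {set V} -> V -> R) : Prop :=
  (forall S : {set V}, S != set0 -> \sum_(i in S) x S i = gamma E w S) /\
  (forall (S T : {set V}) (i : V), S != set0 -> S \subset T -> i \in S ->
      x S i <= x T i).

Definition population_monotonic (R : realFieldType) (V : finType)
  (E : {set {set V}}) (w : {set V} -> R) : Prop :=
  exists x : {set V} -> V -> R, is_PMAS E w x.

Definition has_induced_C4 (V : finType) (E : {set {set V}}) : Prop :=
  exists a b c d : V,
    uniq [:: a; b; c; d] /\
    [set a; b] \in E /\ [set b; c] \in E /\ [set c; d] \in E /\ [set d; a] \in E /\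
    [set a; c] \notin E /\ [set b; d] \notin E.

From mathcomp Require Import all_boot all_order all_algebra.
From mathcomp Require Import lra.
Set Implicit Arguments. Unset Strict Implicit. Unset Printing Implicit Defensive.
Import Order.TTheory GRing.Theory Num.Theory.
Local Open Scope ring_scope.

(* Let a-b-c-d-a be an induced 4-cycle and let bc be an edge of the cycle whose
   weight is not larger than the weights of its two neighbours ab and cd (an
   edge of minimal weight on the cycle will do).  In the induced path a-b-c the
   edges ab and bc meet at b and ac is not an edge, so every matching of
   G[{a,b,c}] has at most one edge and gamma({a,b,c}) <= w(ab).  By efficiency
   and monotonicity, a and b already collect w(ab) <= gamma({a,b}) inside
   {a,b,c}, hence x_{abc}(c) <= 0 and so x_{bc}(c) <= 0.  The symmetric
   argument on the path d-c-b gives x_{bc}(b) <= 0, contradicting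
   x_{bc}(b) + x_{bc}(c) = gamma({b,c}) >= w(bc) > 0. *)

Lemma cyclic_local_min (R : realDomainType) (p q r s : R) :
  [\/ p <= s /\ p <= q, q <= p /\ q <= r, r <= q /\ r <= s | s <= r /\ s <= p].
Proof.
case/orP: (le_total p r) => [pr|rp]; case/orP: (le_total q s) => [qs|sq].
- by case/orP: (le_total p q) => ?; [apply: Or41 | apply: Or42]; lra.
- by case/orP: (le_total p s) => ?; [apply: Or41 | apply: Or44]; lra.
- by case/orP: (le_total r q) => ?; [apply: Or43 | apply: Or42]; lra.
- by case/orP: (le_total r s) => ?; [apply: Or43 | apply: Or44]; lra.
Qed.

Section MatchingGame.
Variables (R : realFieldType) (V : finType) (E : {set {set V}}) (w : {set V} -> R).

Lemma set2_neq0 (u v : V) : [set u; v] != set0.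
Proof. by apply/set0Pn; exists u; rewrite setU11. Qed.

Lemma sum_set2 (F : V -> R) (a b : V) :
  a != b -> \sum_(i in [set a; b]) F i = F a + F b.
Proof. by move=> ab; rewrite big_setU1 ?inE // big_set1. Qed.

Lemma sum_set3 (F : V -> R) (a b c : V) : a != b -> b != c -> a != c ->
  \sum_(i in [set a; b; c]) F i = F a + F b + F c.
Proof.
move=> ab bc ac; rewrite -setUA big_setU1 /= ?sum_set2 ?addrA //.
by rewrite !inE negb_or ab ac.
Qed.

Lemma edge_le_gamma (S e : {set V}) : e \in E -> e \subset S -> w e <= gamma E w S.
Proof.
move=> eE eS; rewrite -(big_set1 GRing.add e w); apply: le_bigmax_cond.
apply/and3P; split; first by rewrite sub1set.
  by apply/forall_inP => f; rewrite inE => /eqP->.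
exact: trivIset1.
Qed.

Lemma gamma_le (S : {set V}) (B : R) : 0 <= B ->
  (forall M, is_matching_in E S M -> \sum_(f in M) w f <= B) -> gamma E w S <= B.
Proof. exact: bigmax_le. Qed.

Lemma gamma_ge0 (S : {set V}) : 0 <= gamma E w S.
Proof.
rewrite -(big_set0 0 +%R w); apply: le_bigmax_cond.
apply/and3P; split; first exact: sub0set.
  by apply/forall_inP => f; rewrite inE.
by apply/trivIsetP => f; rewrite inE.
Qed.

Lemma weight_sub1 (M : {set {set V}}) (e : {set V}) :
  M \subset [set e] -> \sum_(f in M) w f <= Num.max 0 (w e).
Proof.
by rewrite subset1 => /orP[]/eqP->; rewrite ?big_set1 ?big_set0 le_max lexx ?orbT.
Qed.

Hypothesis simple : simple_graph E.

Lemma edge_in_path3 (a b c : V) (f : {set V}) :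
  f \in E -> f \subset [set a; b; c] -> [set a; c] \notin E ->
  f = [set a; b] \/ f = [set b; c].
Proof.
move=> fE fsub acE.
have /cards2P [x [y [xy fxy]]] : #|f| == 2%N by rewrite simple.
move: fE fsub; rewrite fxy => xyE /subsetP xysub.
have inabc z : z \in [set x; y] -> [|| z == a, z == b | z == c].
  by move=> /xysub; rewrite !inE -orbA.
case/or3P: (inabc x (setU11 _ _)) => /eqP xe;
case/or3P: (inabc y (setU1r _ (set11 _))) => /eqP ye; subst x y.
all: try by rewrite eqxx in xy.
all: by [left | right | left; rewrite setUC | right; rewrite setUC
        | rewrite xyE in acE | rewrite setUC xyE in acE].
Qed.

Lemma matching_in_path3 (a b c : V) (M : {set {set V}}) :
  [set a; c] \notin E -> is_matching_in E [set a; b; c] M ->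
  M \subset [set [set a; b]] \/ M \subset [set [set b; c]].
Proof.
move=> acE /and3P[/subsetP ME /forall_inP Msub /trivIsetP Mdisj].
have Medge f : f \in M -> f = [set a; b] \/ f = [set b; c].
  by move=> fM; apply: edge_in_path3 => //; [apply: ME | apply: Msub].
have [bcM | bcM] := boolP ([set b; c] \in M); [right | left];
  apply/subsetP => f fM; rewrite inE; case: (Medge f fM) => fe; rewrite fe ?eqxx //.
- case: (eqVneq [set a; b] [set b; c]) => // ne.
  have := Mdisj _ _ fM bcM; rewrite fe ne => /(_ isT).
  by move=> /disjointFr/(_ (setU1r _ (set11 b))); rewrite setU11.
- by rewrite -fe fM in bcM.
Qed.

Lemma gamma_path3 (a b c : V) : [set a; c] \notin E ->
  gamma E w [set a; b; c] <= Num.max 0 (Num.max (w [set a; b]) (w [set b; c])).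
Proof.
move=> acE; apply: gamma_le => [|M /(matching_in_path3 acE)].
  by rewrite le_max lexx.
by case=> /weight_sub1/le_trans; apply; rewrite ge_max !le_max !lexx ?orbT.
Qed.

Lemma gamma_path3_le_edge (a b c : V) :
  [set a; b] \in E -> [set a; c] \notin E -> w [set b; c] <= w [set a; b] ->
  gamma E w [set a; b; c] <= gamma E w [set a; b].
Proof.
move=> abE acE wle; apply: le_trans (gamma_path3 b acE) _; rewrite (max_l wle).
by rewrite ge_max gamma_ge0 edge_le_gamma.
Qed.

Variable x : {set V} -> V -> R.
Hypothesis pmas : is_PMAS E w x.

(* In an induced path a-b-c whose edge bc is not heavier than ab, the pair
   a,b already claims all of gamma({a,b,c}), so c gets a nonpositive share
   in {a,b,c} and hence, by monotonicity, in {b,c}. *)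
Lemma pmas_light_edge_nonpos (a b c : V) : a != b -> b != c -> a != c ->
  [set a; b] \in E -> [set a; c] \notin E -> w [set b; c] <= w [set a; b] ->
  x [set b; c] c <= 0.
Proof.
move: pmas => [eff mono] ab bc ac abE acE wle.
set T := [set a; b; c].
have abT : [set a; b] \subset T by rewrite /T subsetUl.
have bcT : [set b; c] \subset T by rewrite /T -setUA subsetUr.
have Ta : x [set a; b] a <= x T a by apply: mono (set2_neq0 a b) abT (set21 _ _).
have Tb : x [set a; b] b <= x T b by apply: mono (set2_neq0 a b) abT (set22 _ _).
have Tc : x [set b; c] c <= x T c by apply: mono (set2_neq0 b c) bcT (set22 _ _).
have effT : x T a + x T b + x T c = gamma E w T.
  by rewrite -sum_set3 // eff //; apply/set0Pn; exists a; rewrite !inE eqxx.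
have effab := eff _ (set2_neq0 a b); rewrite sum_set2 // in effab.
have := gamma_path3_le_edge abE acE wle; lra.
Qed.

Lemma pmas_path4_light_edge (a b c d : V) :
  a != b -> b != c -> a != c -> c != d -> b != d ->
  [set a; b] \in E -> [set b; c] \in E -> [set c; d] \in E ->
  [set a; c] \notin E -> [set b; d] \notin E ->
  w [set b; c] <= w [set a; b] -> w [set b; c] <= w [set c; d] ->
  w [set b; c] <= 0.
Proof.
move=> ab bc ac cd bd abE bcE cdE acE bdE wab wcd.
have xc := pmas_light_edge_nonpos ab bc ac abE acE wab.
have xb : x [set c; b] b <= 0.
  apply: (pmas_light_edge_nonpos (a := d)); rewrite 1?eq_sym // ?(setUC [set d]) //.
  by rewrite setUC.
have effbc := pmas.1 _ (set2_neq0 b c); rewrite sum_set2 // in effbc.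
rewrite setUC in xb.
have := edge_le_gamma bcE (subxx _); lra.
Qed.

Definition induced_C4 (a b c d : V) : Prop :=
  uniq [:: a; b; c; d] /\
  [set a; b] \in E /\ [set b; c] \in E /\ [set c; d] \in E /\ [set d; a] \in E /\
  [set a; c] \notin E /\ [set b; d] \notin E.

Lemma induced_C4_rot (a b c d : V) : induced_C4 a b c d -> induced_C4 b c d a.
Proof.
case=> uniq_abcd [abE [bcE [cdE [daE [acE bdE]]]]].
do !split => //; last by rewrite setUC.
by rewrite -(rot_uniq 1) in uniq_abcd.
Qed.

Hypothesis w_pos : forall f, f \in E -> 0 < w f.

Lemma no_light_C4_edge (a b c d : V) : induced_C4 a b c d ->
  w [set b; c] <= w [set a; b] -> w [set b; c] <= w [set c; d] -> False.
Proof.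
case=> + [abE [bcE [cdE [_ [acE bdE]]]]] wab wcd.
rewrite /= !inE !negb_or => /and4P [/and3P [ab ac _] /andP [bc bd] cd _].
have := pmas_path4_light_edge ab bc ac cd bd abE bcE cdE acE bdE wab wcd.
by rewrite leNgt w_pos.
Qed.

End MatchingGame.

Theorem mainTheorem8 (R : realFieldType) (V : finType) (E : {set {set V}})
  (w : {set V} -> R) :
  simple_graph E ->
  (forall f, f \in E -> 0 < w f) ->
  population_monotonic E w ->
  ~ has_induced_C4 E.
Proof.
move=> simple w_pos [x pmas] [a [b [c [d C4a]]]].
have C4b := induced_C4_rot C4a; have C4c := induced_C4_rot C4b.
have C4d := induced_C4_rot C4c.
have no_light := no_light_C4_edge simple pmas w_pos.
have [[l r]|[l r]|[l r]|[l r]] :=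
  cyclic_local_min (w [set b; c]) (w [set c; d]) (w [set d; a]) (w [set a; b]).
- exact: no_light C4a l r.
- exact: no_light C4b l r.
- exact: no_light C4c l r.
- exact: no_light C4d l r.
Qed.
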